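(* For all finite multisets $\Gamma,\Delta$ of formulas: $\mathsf{G}(\mathbf{KT}_D)\vdash\Gamma\Rightarrow\Delta$ if and only if $\mathsf{G}(\mathbf{KT}^+_D)\vdash\emptyset\mid\Gamma\Rightarrow\Delta$.
   Context: Language: fix a finite nonempty set $\mathsf{Agt}$ of agents and a countable set $\mathsf{Prop}$ of propositional variables; $\mathsf{Grp}$ is the set of nonempty subsets of $\mathsf{Agt}$. Formulas: $\alpha::=p\mid\bot\mid\alpha\wedge\alpha\mid\alpha\vee\alpha\mid\alpha\rightarrow\alpha\mid\neg\alpha\mid D_G\alpha$ ($p\in\mathsf{Prop}$, $G\in\mathsf{Grp}$). Outmost-boxed formula: one of the form $D_G\gamma$. Derivable = root of a finite tree built from initial sequents by the rules of the calculus. Calculus $\mathsf{G}(\mathbf{KT}_D)$ on sequents $\Gamma\Rightarrow\Delta$ (pairs of finite multisets): initial sequents $\Gamma,p\Rightarrow p,\Delta$ and $\bot,\Gamma\Rightarrow\Delta$; rules $(R\wedge)$ from $\Gamma\Rightarrow\Delta,\alpha_1$ and $\Gamma\Rightarrow\Delta,\alpha_2$ infer $\Gamma\Rightarrow\Delta,\alpha_1\wedge\alpha_2$; $(L\wedge)$ from $\alpha_1,\alpha_2,\Gamma\Rightarrow\Delta$ infer $\alpha_1\wedge\alpha_2,\Gamma\Rightarrow\Delta$; $(R\vee)$ from $\Gamma\Rightarrow\Delta,\alpha_1,\alpha_2$ infer $\Gamma\Rightarrow\Delta,\alpha_1\vee\alpha_2$; $(L\vee)$ from $\alpha_1,\Gamma\Rightarrow\Delta$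 and $\alpha_2,\Gamma\Rightarrow\Delta$ infer $\alpha_1\vee\alpha_2,\Gamma\Rightarrow\Delta$; $(R\rightarrow)$ from $\alpha_1,\Gamma\Rightarrow\Delta,\alpha_2$ infer $\Gamma\Rightarrow\Delta,\alpha_1\rightarrow\alpha_2$; $(L\rightarrow)$ from $\Gamma\Rightarrow\Delta,\alpha_1$ and $\alpha_2,\Gamma\Rightarrow\Delta$ infer $\alpha_1\rightarrow\alpha_2,\Gamma\Rightarrow\Delta$; $(R\neg)$ from $\alpha,\Gamma\Rightarrow\Delta$ infer $\Gamma\Rightarrow\Delta,\neg\alpha$; $(L\neg)$ from $\Gamma\Rightarrow\Delta,\alpha$ infer $\neg\alpha,\Gamma\Rightarrow\Delta$; $(D_K)$: from $\alpha_1,\dots,\alpha_n\Rightarrow\beta$ ($n\ge0$) infer $\Sigma,D_{G_1}\alpha_1,\dots,D_{G_n}\alpha_n\Rightarrow D_G\beta,\Omega$ where all $G_i\subseteq G$, $\Sigma$ consists only of propositional variables, $\bot$, and $D_H\gamma$ with $H\not\subseteq G$, and $\Omega$ only of propositional variables, $\bot$, outmost-boxed formulas; $(D_T)$: from $D_G\alpha,\alpha,\Gamma\Rightarrow\Delta$ infer $D_G\alpha,\Gamma\Rightarrow\Delta$. Calculus $\mathsf{G}(\mathbf{KT}^+_D)$ on T-sequents $\Sigma\mid\Gamma\Rightarrow\Delta$ ($\Gamma,\Delta$ finite multisets of formulas, $\Sigma$ a finite multiset of outmost-boxed formulas): initial sequents $\Sigma\mid\Gamma,p\Rightarrow p,\Delta$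 and $\Sigma\mid\bot,\Gamma\Rightarrow\Delta$; the same eight propositional rules acting on $\Gamma,\Delta$ with $\Sigma$ unchanged; $(D_K^+)$: from $\emptyset\mid\alpha_1,\dots,\alpha_n\Rightarrow\beta$ ($n\ge0$) infer $\Sigma,D_{G_1}\alpha_1,\dots,D_{G_n}\alpha_n\mid\Pi\Rightarrow D_G\beta,\Omega$, provided $G_i\subseteq G$, $\Sigma$ consists only of formulas $D_H\gamma$ with $H\not\subseteq G$, $\Pi$ only of propositional variables and $\bot$, $\Omega$ only of propositional variables, $\bot$, outmost-boxed formulas; $(D_T^+)$: from $D_G\alpha,\Sigma\mid\Gamma,\alpha\Rightarrow\Delta$ infer $\Sigma\mid\Gamma,D_G\alpha\Rightarrow\Delta$. *)

From mathcomp Require Import all_boot.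
From Stdlib Require Import List Permutation.
Import ListNotations.

Set Implicit Arguments.
Unset Strict Implicit.
Unset Printing Implicit Defensive.

(* Agents: a finite type A (Agt); Prop = nat (countable). *)
Definition grp (A : finType) := {G : {set A} | G != set0}.

Inductive form (A : finType) : Type :=
| Var of nat
| Bot
| And of form A & form A
| Or of form A & form A
| Imp of form A & form A
| Neg of form A
| Dbox of grp A & form A.

Arguments Var {A}.
Arguments Bot {A}.

Section Calculi.
Variable A : finType.

Definition grp_sub (H G : grp A) : Prop := (val H \subset val G).

Definition boxed (f : form A) : Prop :=
  match f with Dbox _ _ => True | _ => False end.

Definition atomic (f : form A) : Prop :=
  match f with Var _ => True | Bot => True | _ => False end.

Definition sigmaK (G : grp A) (f : form A) : Prop :=
  match f with
  | Var _ => True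
  | Bot => True
  | Dbox H _ => ~ grp_sub H G
  | _ => False
  end.

Definition sigmaKp (G : grp A) (f : form A) : Prop :=
  match f with
  | Dbox H _ => ~ grp_sub H G
  | _ => False
  end.

Definition omegaK (f : form A) : Prop := atomic f \/ boxed f.

(* Sequents Gamma => Delta are pairs of finite multisets, represented as lists
   taken up to permutation (constructor der_perm). *)
Inductive derKT : list (form A) -> list (form A) -> Prop :=
| der_perm G D G' D' : derKT G D -> Permutation G G' -> Permutation D D' ->
    derKT G' D'
| der_id p G D : derKT (Var p :: G) (Var p :: D)
| der_bot G D : derKT (Bot :: G) D
| der_Rand G D a1 a2 : derKT G (a1 :: D) -> derKT G (a2 :: D) ->
    derKT G (And a1 a2 :: D)
| der_Land G D a1 a2 : derKT (a1 :: a2 :: G) D -> derKT (And a1 a2 :: G) D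
| der_Ror G D a1 a2 : derKT G (a1 :: a2 :: D) -> derKT G (Or a1 a2 :: D)
| der_Lor G D a1 a2 : derKT (a1 :: G) D -> derKT (a2 :: G) D ->
    derKT (Or a1 a2 :: G) D
| der_Rimp G D a1 a2 : derKT (a1 :: G) (a2 :: D) -> derKT G (Imp a1 a2 :: D)
| der_Limp G D a1 a2 : derKT G (a1 :: D) -> derKT (a2 :: G) D ->
    derKT (Imp a1 a2 :: G) D
| der_Rneg G D a : derKT (a :: G) D -> derKT G (Neg a :: D)
| der_Lneg G D a : derKT G (a :: D) -> derKT (Neg a :: G) D
| der_DK (l : list (grp A * form A)) (G : grp A) b S O :
    derKT (map snd l) [b] ->
    (forall p, In p l -> grp_sub p.1 G) ->
    (forall f, In f S -> sigmaK G f) ->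
    (forall f, In f O -> omegaK f) ->
    derKT (S ++ map (fun p => Dbox p.1 p.2) l) (Dbox G b :: O)
| der_DT G D (H : grp A) a : derKT (Dbox H a :: a :: G) D ->
    derKT (Dbox H a :: G) D.

(* T-sequents  Sigma | Gamma => Delta, Sigma a multiset of outmost-boxed
   formulas. *)
Inductive derKTp : list (form A) -> list (form A) -> list (form A) -> Prop :=
| derp_perm S G D S' G' D' : derKTp S G D -> Permutation S S' ->
    Permutation G G' -> Permutation D D' -> derKTp S' G' D'
| derp_id S p G D : (forall f, In f S -> boxed f) ->
    derKTp S (Var p :: G) (Var p :: D)
| derp_bot S G D : (forall f, In f S -> boxed f) -> derKTp S (Bot :: G) D
| derp_Rand S G D a1 a2 : derKTp S G (a1 :: D) -> derKTp S G (a2 :: D) ->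
    derKTp S G (And a1 a2 :: D)
| derp_Land S G D a1 a2 : derKTp S (a1 :: a2 :: G) D ->
    derKTp S (And a1 a2 :: G) D
| derp_Ror S G D a1 a2 : derKTp S G (a1 :: a2 :: D) ->
    derKTp S G (Or a1 a2 :: D)
| derp_Lor S G D a1 a2 : derKTp S (a1 :: G) D -> derKTp S (a2 :: G) D ->
    derKTp S (Or a1 a2 :: G) D
| derp_Rimp S G D a1 a2 : derKTp S (a1 :: G) (a2 :: D) ->
    derKTp S G (Imp a1 a2 :: D)
| derp_Limp S G D a1 a2 : derKTp S G (a1 :: D) -> derKTp S (a2 :: G) D ->
    derKTp S (Imp a1 a2 :: G) D
| derp_Rneg S G D a : derKTp S (a :: G) D -> derKTp S G (Neg a :: D)
| derp_Lneg S G D a : derKTp S G (a :: D) -> derKTp S (Neg a :: G) D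
| derp_DK (l : list (grp A * form A)) (G : grp A) b S P O :
    derKTp [] (map snd l) [b] ->
    (forall p, In p l -> grp_sub p.1 G) ->
    (forall f, In f S -> sigmaKp G f) ->
    (forall f, In f P -> atomic f) ->
    (forall f, In f O -> omegaK f) ->
    derKTp (S ++ map (fun p => Dbox p.1 p.2) l) P (Dbox G b :: O)
| derp_DT S G D (H : grp A) a : derKTp (Dbox H a :: S) (a :: G) D ->
    derKTp S (Dbox H a :: G) D.

End Calculi.

(* Reading a T-sequent [S | G => D] as the sequent [S, G => D] turns every rule
   of G(KT+_D) into a rule of G(KT_D), which gives one direction.  Conversely,
   every rule of G(KT_D) is admissible in G(KT+_D).  For (D_K), the boxed side
   formulas are moved into Sigma by (D_T^+) and the other side formulas are
   decomposed until (D_K^+) applies; boxes met on the way add their bodies to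
   the premise, so this needs left weakening, which is admissible by the same
   decomposition.  (D_T) keeps its box in Gamma: we invert (D_T^+) on that box
   in the premise, contract the second copy of its body and apply (D_T^+).
   Contraction is admissible by induction on the formula.  A compound formula
   is contracted by inverting its rule on both copies and contracting the
   smaller formulas of the premise; atoms on the left, outmost-boxed formulas on
   the right and boxes in Sigma are principal only in initial sequents and in
   (D_K^+), where the duplicate can be dropped (for a box in Sigma, after
   contracting its body in the premise). *)

From Pilot Require Import Defs.
From mathcomp Require Import all_boot zify.
From Stdlib Require Import List Permutation Lia.

Set Implicit Arguments.
Unset Strict Implicit.
Unset Printing Implicit Defensive.

(* The rules of Defs are stated with [cat]: [++] denotes [cat] throughout. *)
Local Open Scope seq_scope.

Lemma cat_app (T : Type) (l m : list T) : cat l m = app l m.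
Proof. by elim: l => //= x l ->. Qed.

Section ListsUpToPermutation.
Variable T : Type.

Lemma pick_or_all (P : T -> Prop) (L : list T) : (forall x, P x \/ ~ P x) ->
  (forall x, In x L -> P x) \/ exists x L', Permutation L (x :: L') /\ ~ P x.
Proof.
move=> decP; elim: L => [|y L IH]; first by left.
have [Py | nPy] := decP y; last by right; exists y, L.
case: IH => [allL | [x [L' [PL nPx]]]]; first by left=> x [<- | /allL].
right; exists x, (y :: L'); split=> //.
exact: perm_trans (perm_skip y PL) (perm_swap x y L').
Qed.

Lemma in_perm (x : T) L : In x L -> exists L', Permutation L (x :: L').
Proof.
move=> xL; have [L1 [L2 ->]] := in_split _ _ xL; exists (L1 ++ L2).
by rewrite cat_app; exact: Permutation_sym (Permutation_middle L1 L2 x).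
Qed.

Definition contractible (P : list T -> Prop) (x : T) :=
  forall L, P (x :: x :: L) -> P (x :: L).

Lemma contract_dup (P : list T -> Prop) X L :
  (forall L1 L2, Permutation L1 L2 -> P L1 -> P L2) ->
  (forall x, In x X -> contractible P x) -> P (X ++ X ++ L) -> P (X ++ L).
Proof.
move=> permP; elim: X L => [|x X IH] L //= cX H.
have mid N M : Permutation (N ++ x :: M) (x :: N ++ M).
  by rewrite !cat_app; exact: Permutation_sym (Permutation_middle N M x).
have H1 := permP _ _ (perm_skip x (mid X (X ++ L))) H.
have H2 := cX x (or_introl erefl) _ H1.
have P3 : Permutation (x :: X ++ X ++ L) (X ++ X ++ x :: L).
  by rewrite !catA; exact: Permutation_sym (mid _ _).
have H4 := IH (x :: L) (fun y Xy => cX y (or_intror Xy)) (permP _ _ P3 H2).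
exact: permP _ _ (mid X L) H4.
Qed.

End ListsUpToPermutation.

Section KTD.
Variable A : finType.
Implicit Types (a b c f x : form A) (g h : grp A) (l : list (grp A * form A))
  (L M S G D T X Y Z : list (form A)).

Local Notation boxes l := (map (fun p : grp A * form A => Dbox p.1 p.2) l).

Definition form_eq_dec (x y : form A) : {x = y} + {x <> y}.
Proof. decide equality; [exact: PeanoNat.Nat.eq_dec | exact: eq_comparable]. Qed.

Definition occ1 (x z : form A) : nat := if form_eq_dec x z then 1 else 0.

Lemma count_occ_consE x L z :
  count_occ form_eq_dec (x :: L) z = (occ1 x z + count_occ form_eq_dec L z)%coq_nat.
Proof. by rewrite /occ1 /=; case: form_eq_dec. Qed.

(* Compares multiplicities; each [occ1 x z] stays an opaque atom for [lia], so
   no case analysis on equality of formulas is needed. *)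
Ltac perm_solve :=
  apply/(Permutation_count_occ form_eq_dec) => z;
  repeat match goal with P : Permutation _ _ |- _ =>
    move/(Permutation_count_occ form_eq_dec)/(_ z): P end;
  cbn [map app cat fst snd];
  rewrite ?cat_app; repeat progress rewrite ?count_occ_app ?count_occ_consE ?count_occ_nil;
  intros; lia.

Lemma Permutation_cons_cases x c L T : Permutation (x :: L) (c :: T) ->
  (x = c /\ Permutation L T) \/
  exists L', Permutation L (c :: L') /\ Permutation T (x :: L').
Proof.
case: (form_eq_dec x c) => [<- P | neq P].
  by left; split=> //; exact: Permutation_cons_inv P.
have [T' PT] : exists T', Permutation T (x :: T').
  apply: in_perm; have : In x (c :: T) by apply: (Permutation_in _ P); left.
  by case=> // Ecx; case: (neq (esym Ecx)).
by right; exists T'; split; perm_solve.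
Qed.

Lemma Permutation_cons2_cases x c L T : Permutation (x :: L) (c :: c :: T) ->
  (x = c /\ Permutation L (c :: T)) \/
  exists L', Permutation L (c :: c :: L') /\ Permutation T (x :: L').
Proof.
case: (form_eq_dec x c) => [<- P | neq P].
  by left; split=> //; exact: Permutation_cons_inv P.
have [T' PT] : exists T', Permutation T (x :: T').
  apply: in_perm; have : In x (c :: c :: T) by apply: (Permutation_in _ P); left.
  by case=> [|[|//]] Ecx; case: (neq (esym Ecx)).
by right; exists T'; split; perm_solve.
Qed.

Lemma Permutation_app_dup c L1 L2 S : ~ In c L2 ->
  Permutation (L1 ++ L2) (c :: c :: S) ->
  exists L1', Permutation L1 (c :: c :: L1') /\ Permutation S (L1' ++ L2).
Proof.
move=> nc P; have inL1 L : In c (L ++ L2) -> In c L.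
  by rewrite cat_app => cL; case: (in_app_or _ _ _ cL).
have [M PM] := in_perm (inL1 _ (Permutation_in _ (Permutation_sym P) (or_introl erefl))).
have PMS : Permutation (M ++ L2) (c :: S) by perm_solve.
have [L1' PL1'] := in_perm (inL1 _ (Permutation_in _ (Permutation_sym PMS) (or_introl erefl))).
by exists L1'; split; perm_solve.
Qed.

Lemma Permutation_boxes_dup h a l L :
  Permutation (boxes l) (Dbox h a :: Dbox h a :: L) ->
  exists l', Permutation l ((h, a) :: (h, a) :: l') /\ L = boxes l'.
Proof.
move/Permutation_sym/Permutation_map_inv=> [[|[h1 a1] [|[h2 a2] l']] [//= E Pl]].
by case: E => *; subst; exists l'.
Qed.

Lemma derKTp_permS S S' G D : Permutation S S' -> derKTp S G D -> derKTp S' G D.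
Proof. by move=> PS H; exact: derp_perm H PS (Permutation_refl _) (Permutation_refl _). Qed.

Lemma derKTp_permG S G G' D : Permutation G G' -> derKTp S G D -> derKTp S G' D.
Proof. by move=> PG H; exact: derp_perm H (Permutation_refl _) PG (Permutation_refl _). Qed.

Lemma derKTp_permD S G D D' : Permutation D D' -> derKTp S G D -> derKTp S G D'.
Proof. by move=> PD H; exact: derp_perm H (Permutation_refl _) (Permutation_refl _) PD. Qed.

Tactic Notation "perm_exact" uconstr(H) := unshelve refine (derp_perm H _ _ _); perm_solve.

Lemma derKTp_derKT S G D : derKTp S G D -> derKT (G ++ S) D.
Proof.
elim=> {S G D}.
- move=> S G D S' G' D' _ IH PS PG PD.
  by apply: (der_perm IH _ PD); perm_solve.
- by move=> *; apply: der_id.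
- by move=> *; apply: der_bot.
- by move=> *; apply: der_Rand.
- by move=> *; apply: der_Land.
- by move=> *; apply: der_Ror.
- by move=> *; apply: der_Lor.
- by move=> *; apply: der_Rimp.
- by move=> *; apply: der_Limp.
- by move=> *; apply: der_Rneg.
- by move=> *; apply: der_Lneg.
- move=> l g b S P O _ IH lg Sg Pat Oom.
  rewrite cats0 in IH; rewrite catA.
  apply: (der_DK IH lg _ Oom) => f; rewrite cat_app => fPS.
  by case: (in_app_or _ _ _ fPS) => [/Pat | /Sg]; case: f {fPS}.
- move=> S G D h a _ IH; apply: der_DT.
  by apply: (der_perm IH _ (Permutation_refl D)); perm_solve.
Qed.

Fixpoint fsize f : nat :=
  match f with
  | Var _ | Bot => 1
  | And a b | Or a b | Imp a b => (fsize a + fsize b).+1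
  | Neg a | Dbox _ a => (fsize a).+1
  end.

Definition msize L : nat := sumn (map fsize L).

Lemma msize_cons x L : msize (x :: L) = fsize x + msize L.
Proof. by []. Qed.

Lemma msize_cat L M : msize (L ++ M) = msize L + msize M.
Proof. by elim: L => //= x L; rewrite /msize /= => ->; rewrite addnA. Qed.

Lemma msize_perm L M : Permutation L M -> msize L = msize M.
Proof. by rewrite /msize; elim=> //= [x L' M' _ -> | x y L' | L' M' N _ -> _ ->] //; lia. Qed.

Lemma fsize_le_msize x L : In x L -> fsize x <= msize L.
Proof. by elim: L => //= y L IH [<- | /IH]; rewrite /msize /=; lia. Qed.

Lemma atomic_dec f : atomic f \/ ~ atomic f.
Proof. by case: f => /=; tauto. Qed.

Lemma omegaK_dec f : omegaK f \/ ~ omegaK f.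
Proof. by rewrite /omegaK; case: f => /=; tauto. Qed.

(* [lprem c X Y Z]: [Z ++ S | X ++ T => Y ++ D] is a premise of the left rule
   for [c] with conclusion [S | c :: T => D]; [rprem] is the analogue for the
   right rules, which leave [S] unchanged. *)
Inductive lprem : form A -> list (form A) -> list (form A) -> list (form A) -> Prop :=
| lprem_and a b : lprem (And a b) [:: a; b] [::] [::]
| lprem_or1 a b : lprem (Or a b) [:: a] [::] [::]
| lprem_or2 a b : lprem (Or a b) [:: b] [::] [::]
| lprem_imp1 a b : lprem (Imp a b) [::] [:: a] [::]
| lprem_imp2 a b : lprem (Imp a b) [:: b] [::] [::]
| lprem_neg a : lprem (Neg a) [::] [:: a] [::]
| lprem_box h a : lprem (Dbox h a) [:: a] [::] [:: Dbox h a].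

Inductive rprem : form A -> list (form A) -> list (form A) -> Prop :=
| rprem_and1 a b : rprem (And a b) [::] [:: a]
| rprem_and2 a b : rprem (And a b) [::] [:: b]
| rprem_or a b : rprem (Or a b) [::] [:: a; b]
| rprem_imp a b : rprem (Imp a b) [:: a] [:: b]
| rprem_neg a : rprem (Neg a) [:: a] [::].

Lemma lprem_not_atomic c X Y Z : lprem c X Y Z -> ~ atomic c.
Proof. by case=> [a b|a b|a b|a b|a b|a|h a] []. Qed.

Lemma rprem_not_omegaK c X Y : rprem c X Y -> ~ omegaK c.
Proof. by case=> [a b|a b|a b|a b|a] [] []. Qed.

Lemma lprem_size c X Y Z : lprem c X Y Z -> msize X + msize Y < fsize c.
Proof. by case=> * /=; rewrite /msize /=; lia. Qed.

Lemma rprem_size c X Y : rprem c X Y -> msize X + msize Y < fsize c.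
Proof. by case=> * /=; rewrite /msize /=; lia. Qed.

Lemma lprem_Sigma c X Y Z : lprem c X Y Z ->
  Z = [::] \/ exists h a, c = Dbox h a /\ Z = [:: c].
Proof. by case=> [a b|a b|a b|a b|a b|a|h a]; [left..| right; exists h, a]. Qed.

Lemma lprem_boxed c X Y Z S : lprem c X Y Z ->
  (forall f, In f S -> boxed f) -> forall f, In f (Z ++ S) -> boxed f.
Proof. by move=> /lprem_Sigma [-> // | [h [a [-> ->]]]] Sb f /= [<- // | /Sb]. Qed.

Lemma lprem_rule c S T D : ~ atomic c ->
  (forall X Y Z, lprem c X Y Z -> derKTp (Z ++ S) (X ++ T) (Y ++ D)) ->
  derKTp S (c :: T) D.
Proof.
case: c => [n || a b | a b | a b | a | h a] Nc prem; try by case: (Nc I).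
- exact: derp_Land (prem _ _ _ (lprem_and a b)).
- exact: derp_Lor (prem _ _ _ (lprem_or1 a b)) (prem _ _ _ (lprem_or2 a b)).
- exact: derp_Limp (prem _ _ _ (lprem_imp1 a b)) (prem _ _ _ (lprem_imp2 a b)).
- exact: derp_Lneg (prem _ _ _ (lprem_neg a)).
- exact: derp_DT (prem _ _ _ (lprem_box h a)).
Qed.

Lemma rprem_rule c S G T : ~ omegaK c ->
  (forall X Y, rprem c X Y -> derKTp S (X ++ G) (Y ++ T)) ->
  derKTp S G (c :: T).
Proof.
case: c => [n || a b | a b | a b | a | h a] Nc prem; try by [case: Nc; left | case: Nc; right].
- exact: derp_Rand (prem _ _ (rprem_and1 a b)) (prem _ _ (rprem_and2 a b)).
- exact: derp_Ror (prem _ _ (rprem_or a b)).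
- exact: derp_Rimp (prem _ _ (rprem_imp a b)).
- exact: derp_Rneg (prem _ _ (rprem_neg a)).
Qed.

(* [X] and [Y] are decomposed until (D_K^+) applies; a box met on the way joins
   [S] or [l] according to its group, in the latter case adding its body to the
   premise, hence the weakened premise. *)
Lemma derKTp_DK_adm g b S l X Y :
  (forall Z, derKTp [::] (map snd l ++ Z) [:: b]) ->
  (forall p, In p l -> grp_sub p.1 g) ->
  (forall f, In f S -> sigmaKp g f) ->
  derKTp (S ++ boxes l) X (Dbox g b :: Y).
Proof.
have [n] := ubnP (msize X + msize Y); elim: n => // n IHn in S l X Y *.
rewrite ltnS => sizeXY wkb lg Sg.
have [Xat | [c [X' [PX Nc]]]] := pick_or_all X atomic_dec.
  have [Yom | [c [Y' [PY Nc]]]] := pick_or_all Y omegaK_dec.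
    have prem : derKTp [::] (map snd l) [:: b] by rewrite -[map snd l]cats0.
    exact: derp_DK prem lg Sg Xat Yom.
  apply: (derKTp_permD (D := c :: Dbox g b :: Y')); first by perm_solve.
  apply: (rprem_rule Nc) => X1 Y1 o.
  apply: (derKTp_permD (D := Dbox g b :: Y1 ++ Y')); first by perm_solve.
  apply: IHn => //; move: (rprem_size o) sizeXY.
  by rewrite !msize_cat (msize_perm PY) msize_cons; lia.
apply: (derKTp_permG (G := c :: X')); first by perm_solve.
apply: (lprem_rule Nc) => X1 Y1 Z1 o.
apply: (derKTp_permD (D := Dbox g b :: Y1 ++ Y)); first by perm_solve.
have size1 : msize (X1 ++ X') + msize (Y1 ++ Y) < n.
  by move: (lprem_size o) sizeXY; rewrite !msize_cat (msize_perm PX) msize_cons; lia.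
have [-> | [h [a [-> ->]]]] := lprem_Sigma o; first exact: IHn.
have [hg | nhg] := boolP (val h \subset val g).
  apply: (derKTp_permS (S := S ++ boxes ((h, a) :: l))); first by perm_solve.
  apply: IHn => // [Z | p [<- // | /lg //]].
  by apply: (derKTp_permG _ (wkb (a :: Z))); perm_solve.
apply: (IHn (Dbox h a :: S)) => // f [<- | /Sg //].
exact/negP.
Qed.

Lemma derKTp_weakL S G D Z : derKTp S G D -> derKTp S (G ++ Z) D.
Proof.
move=> H; elim: H Z => {S G D}.
- move=> S G D S' G' D' _ IH PS PG PD Z.
  by apply: (derp_perm (IH Z) PS _ PD); perm_solve.
- by move=> S p G D Sb Z; apply: derp_id.
- by move=> S G D Sb Z; apply: derp_bot.
- by move=> S G D a1 a2 _ IH1 _ IH2 Z; exact: derp_Rand (IH1 Z) (IH2 Z).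
- by move=> S G D a1 a2 _ IH Z; exact: derp_Land (IH Z).
- by move=> S G D a1 a2 _ IH Z; exact: derp_Ror (IH Z).
- by move=> S G D a1 a2 _ IH1 _ IH2 Z; exact: derp_Lor (IH1 Z) (IH2 Z).
- by move=> S G D a1 a2 _ IH Z; exact: derp_Rimp (IH Z).
- by move=> S G D a1 a2 _ IH1 _ IH2 Z; exact: derp_Limp (IH1 Z) (IH2 Z).
- by move=> S G D a _ IH Z; exact: derp_Rneg (IH Z).
- by move=> S G D a _ IH Z; exact: derp_Lneg (IH Z).
- by move=> l g b S P O _ IH lg Sg _ _ Z; apply: derKTp_DK_adm.
- by move=> S G D h a _ IH Z; exact: derp_DT (IH Z).
Qed.

Lemma derKTp_invL c X Y Z S G0 D T : lprem c X Y Z ->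
  derKTp S G0 D -> Permutation G0 (c :: T) -> derKTp (Z ++ S) (X ++ T) (Y ++ D).
Proof.
move=> o H; elim: H T => {S G0 D}.
- move=> S G D S' G' D' _ IH PS PG PD T PT.
  by apply: (derp_perm (IH T (perm_trans PG PT))); perm_solve.
- move=> S p G D Sb T /Permutation_cons_cases [[Ec _] | [G2 [_ PT]]].
    by case: (lprem_not_atomic o); rewrite -Ec.
  perm_exact (derp_id p (X ++ G2) (Y ++ D) (lprem_boxed o Sb)).
- move=> S G D Sb T /Permutation_cons_cases [[Ec _] | [G2 [_ PT]]].
    by case: (lprem_not_atomic o); rewrite -Ec.
  perm_exact (derp_bot (X ++ G2) (Y ++ D) (lprem_boxed o Sb)).
- move=> S G D a1 a2 _ IH1 _ IH2 T PT.
  apply: (derKTp_permD (D := And a1 a2 :: Y ++ D)); first by perm_solve.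
  by apply: derp_Rand; [perm_exact (IH1 T PT) | perm_exact (IH2 T PT)].
- move=> S G D a1 a2 H IH T /Permutation_cons_cases [[Ec PG] | [G2 [PG PT]]].
    by subst c; inversion o; subst; perm_exact H.
  apply: (derKTp_permG (G := And a1 a2 :: X ++ G2)); first by perm_solve.
  by apply: derp_Land; perm_exact (IH (a1 :: a2 :: G2) _).
- move=> S G D a1 a2 _ IH T PT.
  apply: (derKTp_permD (D := Or a1 a2 :: Y ++ D)); first by perm_solve.
  by apply: derp_Ror; perm_exact (IH T PT).
- move=> S G D a1 a2 H1 IH1 H2 IH2 T /Permutation_cons_cases [[Ec PG] | [G2 [PG PT]]].
    by subst c; inversion o; subst; [perm_exact H1 | perm_exact H2].
  apply: (derKTp_permG (G := Or a1 a2 :: X ++ G2)); first by perm_solve.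
  by apply: derp_Lor; [perm_exact (IH1 (a1 :: G2) _) | perm_exact (IH2 (a2 :: G2) _)].
- move=> S G D a1 a2 _ IH T PT.
  apply: (derKTp_permD (D := Imp a1 a2 :: Y ++ D)); first by perm_solve.
  by apply: derp_Rimp; perm_exact (IH (a1 :: T) _).
- move=> S G D a1 a2 H1 IH1 H2 IH2 T /Permutation_cons_cases [[Ec PG] | [G2 [PG PT]]].
    by subst c; inversion o; subst; [perm_exact H1 | perm_exact H2].
  apply: (derKTp_permG (G := Imp a1 a2 :: X ++ G2)); first by perm_solve.
  by apply: derp_Limp; [perm_exact (IH1 G2 _) | perm_exact (IH2 (a2 :: G2) _)].
- move=> S G D a _ IH T PT.
  apply: (derKTp_permD (D := Neg a :: Y ++ D)); first by perm_solve.
  by apply: derp_Rneg; perm_exact (IH (a :: T) _).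
- move=> S G D a H IH T /Permutation_cons_cases [[Ec PG] | [G2 [PG PT]]].
    by subst c; inversion o; subst; perm_exact H.
  apply: (derKTp_permG (G := Neg a :: X ++ G2)); first by perm_solve.
  by apply: derp_Lneg; perm_exact (IH G2 _).
- move=> l g b S P O _ _ _ _ Pat _ T PT.
  case: (lprem_not_atomic o); apply: Pat.
  by apply: (Permutation_in _ (Permutation_sym PT)); left.
- move=> S G D h a H IH T /Permutation_cons_cases [[Ec PG] | [G2 [PG PT]]].
    by subst c; inversion o; subst; perm_exact H.
  apply: (derKTp_permG (G := Dbox h a :: X ++ G2)); first by perm_solve.
  by apply: derp_DT; perm_exact (IH (a :: G2) _).
Qed.

Lemma derKTp_invR c X Y S G D0 T : rprem c X Y ->
  derKTp S G D0 -> Permutation D0 (c :: T) -> derKTp S (X ++ G) (Y ++ T).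
Proof.
move=> o H; elim: H T => {S G D0}.
- move=> S G D S' G' D' _ IH PS PG PD T PT.
  by apply: (derp_perm (IH T (perm_trans PD PT))); perm_solve.
- move=> S p G D Sb T /Permutation_cons_cases [[Ec _] | [D2 [_ PT]]].
    by case: (rprem_not_omegaK o); rewrite -Ec; left.
  perm_exact (derp_id p (X ++ G) (Y ++ D2) Sb).
- by move=> S G D Sb T PT; perm_exact (derp_bot (X ++ G) (Y ++ T) Sb).
- move=> S G D a1 a2 H1 IH1 H2 IH2 T /Permutation_cons_cases [[Ec PD] | [D2 [PD PT]]].
    by subst c; inversion o; subst; [perm_exact H1 | perm_exact H2].
  apply: (derKTp_permD (D := And a1 a2 :: Y ++ D2)); first by perm_solve.
  by apply: derp_Rand; [perm_exact (IH1 (a1 :: D2) _) | perm_exact (IH2 (a2 :: D2) _)].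
- move=> S G D a1 a2 _ IH T PT.
  apply: (derKTp_permG (G := And a1 a2 :: X ++ G)); first by perm_solve.
  by apply: derp_Land; perm_exact (IH T PT).
- move=> S G D a1 a2 H IH T /Permutation_cons_cases [[Ec PD] | [D2 [PD PT]]].
    by subst c; inversion o; subst; perm_exact H.
  apply: (derKTp_permD (D := Or a1 a2 :: Y ++ D2)); first by perm_solve.
  by apply: derp_Ror; perm_exact (IH (a1 :: a2 :: D2) _).
- move=> S G D a1 a2 _ IH1 _ IH2 T PT.
  apply: (derKTp_permG (G := Or a1 a2 :: X ++ G)); first by perm_solve.
  by apply: derp_Lor; [perm_exact (IH1 T PT) | perm_exact (IH2 T PT)].
- move=> S G D a1 a2 H IH T /Permutation_cons_cases [[Ec PD] | [D2 [PD PT]]].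
    by subst c; inversion o; subst; perm_exact H.
  apply: (derKTp_permD (D := Imp a1 a2 :: Y ++ D2)); first by perm_solve.
  by apply: derp_Rimp; perm_exact (IH (a2 :: D2) _).
- move=> S G D a1 a2 _ IH1 _ IH2 T PT.
  apply: (derKTp_permG (G := Imp a1 a2 :: X ++ G)); first by perm_solve.
  by apply: derp_Limp; [perm_exact (IH1 (a1 :: T) _) | perm_exact (IH2 T PT)].
- move=> S G D a H IH T /Permutation_cons_cases [[Ec PD] | [D2 [PD PT]]].
    by subst c; inversion o; subst; perm_exact H.
  apply: (derKTp_permD (D := Neg a :: Y ++ D2)); first by perm_solve.
  by apply: derp_Rneg; perm_exact (IH D2 _).
- move=> S G D a _ IH T PT.
  apply: (derKTp_permG (G := Neg a :: X ++ G)); first by perm_solve.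
  by apply: derp_Lneg; perm_exact (IH (a :: T) _).
- move=> l g b S P O _ _ _ _ _ Oom T PT.
  case: (rprem_not_omegaK o).
  have : In c (Dbox g b :: O) by apply: (Permutation_in _ (Permutation_sym PT)); left.
  by case=> [<- | /Oom //]; right.
- move=> S G D h a _ IH T PT.
  apply: (derKTp_permG (G := Dbox h a :: X ++ G)); first by perm_solve.
  by apply: derp_DT; perm_exact (IH T PT).
Qed.

Lemma derKTp_contrL_atomic c S G0 D T : atomic c ->
  derKTp S G0 D -> Permutation G0 (c :: c :: T) -> derKTp S (c :: T) D.
Proof.
move=> Ac H; elim: H T => {S G0 D}.
- move=> S G D S' G' D' _ IH PS PG PD T PT.
  exact: derp_perm (IH T (perm_trans PG PT)) PS (Permutation_refl _) PD.
- move=> S p G D Sb T /Permutation_cons2_cases [[<- _] | [G2 [_ PT]]].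
    exact: derp_id.
  perm_exact (derp_id p (c :: G2) D Sb).
- move=> S G D Sb T /Permutation_cons2_cases [[<- _] | [G2 [_ PT]]].
    exact: derp_bot.
  perm_exact (derp_bot (c :: G2) D Sb).
- by move=> S G D a1 a2 _ IH1 _ IH2 T PT; exact: derp_Rand (IH1 T PT) (IH2 T PT).
- move=> S G D a1 a2 _ IH T /Permutation_cons2_cases [[Ec _] | [G2 [PG PT]]].
    by rewrite -Ec in Ac.
  apply: (derKTp_permG (G := And a1 a2 :: c :: G2)); first by perm_solve.
  by apply: derp_Land; perm_exact (IH (a1 :: a2 :: G2) _).
- by move=> S G D a1 a2 _ IH T PT; exact: derp_Ror (IH T PT).
- move=> S G D a1 a2 _ IH1 _ IH2 T /Permutation_cons2_cases [[Ec _] | [G2 [PG PT]]].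
    by rewrite -Ec in Ac.
  apply: (derKTp_permG (G := Or a1 a2 :: c :: G2)); first by perm_solve.
  by apply: derp_Lor; [perm_exact (IH1 (a1 :: G2) _) | perm_exact (IH2 (a2 :: G2) _)].
- by move=> S G D a1 a2 _ IH T PT; apply: derp_Rimp; perm_exact (IH (a1 :: T) _).
- move=> S G D a1 a2 _ IH1 _ IH2 T /Permutation_cons2_cases [[Ec _] | [G2 [PG PT]]].
    by rewrite -Ec in Ac.
  apply: (derKTp_permG (G := Imp a1 a2 :: c :: G2)); first by perm_solve.
  by apply: derp_Limp; [perm_exact (IH1 G2 _) | perm_exact (IH2 (a2 :: G2) _)].
- by move=> S G D a _ IH T PT; apply: derp_Rneg; perm_exact (IH (a :: T) _).
- move=> S G D a _ IH T /Permutation_cons2_cases [[Ec _] | [G2 [PG PT]]].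
    by rewrite -Ec in Ac.
  apply: (derKTp_permG (G := Neg a :: c :: G2)); first by perm_solve.
  by apply: derp_Lneg; perm_exact (IH G2 _).
- move=> l g b S P O prem _ lg Sg Pat Oom T PT.
  apply: derp_DK => // f cTf; apply: Pat.
  exact: Permutation_in _ (Permutation_sym PT) (in_cons _ _ _ cTf).
- move=> S G D h a _ IH T /Permutation_cons2_cases [[Ec _] | [G2 [PG PT]]].
    by rewrite -Ec in Ac.
  apply: (derKTp_permG (G := Dbox h a :: c :: G2)); first by perm_solve.
  by apply: derp_DT; perm_exact (IH (a :: G2) _).
Qed.

Lemma derKTp_contrR_omegaK c S G D0 T : omegaK c ->
  derKTp S G D0 -> Permutation D0 (c :: c :: T) -> derKTp S G (c :: T).
Proof.
move=> Oc H; elim: H T => {S G D0}.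
- move=> S G D S' G' D' _ IH PS PG PD T PT.
  exact: derp_perm (IH T (perm_trans PD PT)) PS PG (Permutation_refl _).
- move=> S p G D Sb T /Permutation_cons2_cases [[<- _] | [D2 [_ PT]]].
    exact: derp_id.
  perm_exact (derp_id p G (c :: D2) Sb).
- by move=> S G D Sb T PT; apply: derp_bot.
- move=> S G D a1 a2 _ IH1 _ IH2 T /Permutation_cons2_cases [[Ec _] | [D2 [PD PT]]].
    by rewrite -Ec in Oc; case: Oc.
  apply: (derKTp_permD (D := And a1 a2 :: c :: D2)); first by perm_solve.
  by apply: derp_Rand; [perm_exact (IH1 (a1 :: D2) _) | perm_exact (IH2 (a2 :: D2) _)].
- by move=> S G D a1 a2 _ IH T PT; exact: derp_Land (IH T PT).
- move=> S G D a1 a2 _ IH T /Permutation_cons2_cases [[Ec _] | [D2 [PD PT]]].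
    by rewrite -Ec in Oc; case: Oc.
  apply: (derKTp_permD (D := Or a1 a2 :: c :: D2)); first by perm_solve.
  by apply: derp_Ror; perm_exact (IH (a1 :: a2 :: D2) _).
- by move=> S G D a1 a2 _ IH1 _ IH2 T PT; exact: derp_Lor (IH1 T PT) (IH2 T PT).
- move=> S G D a1 a2 _ IH T /Permutation_cons2_cases [[Ec _] | [D2 [PD PT]]].
    by rewrite -Ec in Oc; case: Oc.
  apply: (derKTp_permD (D := Imp a1 a2 :: c :: D2)); first by perm_solve.
  by apply: derp_Rimp; perm_exact (IH (a2 :: D2) _).
- move=> S G D a1 a2 _ IH1 _ IH2 T PT.
  by apply: derp_Limp; [perm_exact (IH1 (a1 :: T) _) | exact: IH2].
- move=> S G D a _ IH T /Permutation_cons2_cases [[Ec _] | [D2 [PD PT]]].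
    by rewrite -Ec in Oc; case: Oc.
  apply: (derKTp_permD (D := Neg a :: c :: D2)); first by perm_solve.
  by apply: derp_Rneg; perm_exact (IH D2 _).
- by move=> S G D a _ IH T PT; apply: derp_Lneg; perm_exact (IH (a :: T) _).
- move=> l g b S P O prem _ lg Sg Pat Oom T /Permutation_cons2_cases [[<- PO] | [O2 [PO PT]]].
    apply: derp_DK => // f Tf; apply: Oom.
    exact: Permutation_in _ (Permutation_sym PO) (in_cons _ _ _ Tf).
  apply: (derKTp_permD (D := Dbox g b :: c :: O2)); first by perm_solve.
  apply: derp_DK => // f cOf; apply: Oom.
  exact: Permutation_in _ (Permutation_sym PO) (in_cons _ _ _ cOf).
- by move=> S G D h a _ IH T PT; exact: derp_DT (IH T PT).
Qed.

Definition contractibleL c := forall S D, contractible (fun G => derKTp S G D) c.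
Definition contractibleR c := forall S G, contractible (fun D => derKTp S G D) c.
Definition contractibleS c := forall G D, contractible (fun S => derKTp S G D) c.

Lemma derKTp_contrL_dup X S G D : (forall x, In x X -> contractibleL x) ->
  derKTp S (X ++ X ++ G) D -> derKTp S (X ++ G) D.
Proof.
move=> cX; apply: (contract_dup (P := fun G => derKTp S G D)) => [L1 L2 | x /cX //].
exact: derKTp_permG.
Qed.

Lemma derKTp_contrR_dup Y S G D : (forall y, In y Y -> contractibleR y) ->
  derKTp S G (Y ++ Y ++ D) -> derKTp S G (Y ++ D).
Proof.
move=> cY; apply: (contract_dup (P := fun D => derKTp S G D)) => [L1 L2 | y /cY //].
exact: derKTp_permD.
Qed.

Lemma derKTp_contrS_dup Z S G D : (forall z, In z Z -> contractibleS z) ->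
  derKTp (Z ++ Z ++ S) G D -> derKTp (Z ++ S) G D.
Proof.
move=> cZ; apply: (contract_dup (P := fun S => derKTp S G D)) => [L1 L2 | z /cZ //].
exact: derKTp_permS.
Qed.

Lemma derKTp_DK_contrS h a l g b S' P O S : contractibleL a ->
  derKTp [::] (map snd l) [:: b] ->
  (forall p, In p l -> grp_sub p.1 g) ->
  (forall f, In f S' -> sigmaKp g f) ->
  (forall f, In f P -> atomic f) ->
  (forall f, In f O -> omegaK f) ->
  Permutation (S' ++ boxes l) (Dbox h a :: Dbox h a :: S) ->
  derKTp (Dbox h a :: S) P (Dbox g b :: O).
Proof.
move=> ca prem lg Sg Pat Oom PS.
have [hg | nhg] := boolP (val h \subset val g).
  have nS' : ~ In (Dbox h a) S' by move/Sg.
  have PS2 : Permutation (boxes l ++ S') (Dbox h a :: Dbox h a :: S) by perm_solve.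
  have [L [PL PSL]] := Permutation_app_dup nS' PS2.
  have [l' [Pl EL]] := Permutation_boxes_dup PL.
  have Psnd := Permutation_map snd Pl.
  have prem' : derKTp [::] (a :: map snd l') [:: b].
    by apply: ca; apply: (derKTp_permG _ prem).
  apply: (derKTp_permS (S := S' ++ boxes ((h, a) :: l'))); first by subst L; perm_solve.
  apply: (derp_DK (l := (h, a) :: l') prem' _ Sg Pat Oom) => p pl'.
  by apply: lg; apply: (Permutation_in _ (Permutation_sym Pl)); right.
have nl : ~ In (Dbox h a) (boxes l).
  move=> /in_map_iff [[h' a'] [E /lg hg]].
  by case: E hg => -> _ hg; exact: (negP nhg).
have [S1 [PS1 PSS]] := Permutation_app_dup nl PS.
apply: (derKTp_permS (S := (Dbox h a :: S1) ++ boxes l)); first by perm_solve.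
apply: (derp_DK prem lg _ Pat Oom) => f [<- | fS1]; first exact/negP.
exact: Sg (Permutation_in _ (Permutation_sym PS1) (in_cons _ _ _ (in_cons _ _ _ fS1))).
Qed.

Lemma derKTp_contrS_box h a S0 G D S : contractibleL a ->
  derKTp S0 G D -> Permutation S0 (Dbox h a :: Dbox h a :: S) ->
  derKTp (Dbox h a :: S) G D.
Proof.
move=> ca H; elim: H S => {S0 G D}.
- move=> S0 G D S0' G' D' _ IH PS PG PD S PT.
  exact: derp_perm (IH S (perm_trans PS PT)) (Permutation_refl _) PG PD.
- move=> S0 p G D Sb S PT; apply: derp_id => f /(in_cons (Dbox h a)) fS.
  exact: Sb (Permutation_in _ (Permutation_sym PT) fS).
- move=> S0 G D Sb S PT; apply: derp_bot => f /(in_cons (Dbox h a)) fS.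
  exact: Sb (Permutation_in _ (Permutation_sym PT) fS).
- by move=> S0 G D a1 a2 _ IH1 _ IH2 S PT; exact: derp_Rand (IH1 S PT) (IH2 S PT).
- by move=> S0 G D a1 a2 _ IH S PT; exact: derp_Land (IH S PT).
- by move=> S0 G D a1 a2 _ IH S PT; exact: derp_Ror (IH S PT).
- by move=> S0 G D a1 a2 _ IH1 _ IH2 S PT; exact: derp_Lor (IH1 S PT) (IH2 S PT).
- by move=> S0 G D a1 a2 _ IH S PT; exact: derp_Rimp (IH S PT).
- by move=> S0 G D a1 a2 _ IH1 _ IH2 S PT; exact: derp_Limp (IH1 S PT) (IH2 S PT).
- by move=> S0 G D a' _ IH S PT; exact: derp_Rneg (IH S PT).
- by move=> S0 G D a' _ IH S PT; exact: derp_Lneg (IH S PT).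
- move=> l g b S' P O prem _ lg Sg Pat Oom S PT.
  exact: derKTp_DK_contrS ca prem lg Sg Pat Oom PT.
- move=> S0 G D h' a' _ IH S PT.
  by apply: derp_DT; perm_exact (IH (Dbox h' a' :: S) _).
Qed.

Section CompoundContraction.

Variable c : form A.
Hypothesis contr_smaller :
  forall a, fsize a < fsize c -> contractibleL a /\ contractibleR a.

Lemma contractible_premise X Y :
  msize X + msize Y < fsize c ->
  (forall x, In x X -> contractibleL x) /\ (forall y, In y Y -> contractibleR y).
Proof.
move=> lt; split=> [x | y] /fsize_le_msize le.
  by apply: (proj1 (contr_smaller _)); lia.
by apply: (proj2 (contr_smaller _)); lia.
Qed.

Lemma derKTp_contrL_compound : ~ atomic c -> contractibleL c.
Proof.
move=> Nc S D T H; apply: (lprem_rule Nc) => X Y Z o.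
have [cX cY] := contractible_premise (lprem_size o).
have cZ z : In z Z -> contractibleS z.
  case: (lprem_Sigma o) => [-> // | [h [a [Ec ->]]] [<- | //]] G D' L HL.
  have lt : fsize a < fsize c by rewrite Ec /=; lia.
  rewrite Ec in HL *.
  exact: derKTp_contrS_box (proj1 (contr_smaller lt)) HL (Permutation_refl _).
have H1 := derKTp_invL o H (Permutation_refl _).
have PXT : Permutation (X ++ c :: T) (c :: X ++ T) by perm_solve.
apply: (derKTp_contrS_dup cZ); apply: (derKTp_contrL_dup cX); apply: (derKTp_contrR_dup cY).
exact: derKTp_invL o H1 PXT.
Qed.

Lemma derKTp_contrR_compound : ~ omegaK c -> contractibleR c.
Proof.
move=> Nc S G T H; apply: (rprem_rule Nc) => X Y o.
have [cX cY] := contractible_premise (rprem_size o).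
have H1 := derKTp_invR o H (Permutation_refl _).
have PYT : Permutation (Y ++ c :: T) (c :: Y ++ T) by perm_solve.
apply: (derKTp_contrL_dup cX); apply: (derKTp_contrR_dup cY).
exact: derKTp_invR o H1 PYT.
Qed.

End CompoundContraction.

Lemma derKTp_contr c : contractibleL c /\ contractibleR c.
Proof.
have [n] := ubnP (fsize c); elim: n => // n IHn in c *; rewrite ltnS => szc.
have smaller a : fsize a < fsize c -> contractibleL a /\ contractibleR a.
  by move=> lt; apply: IHn; lia.
split.
  have [Ac | Nc] := atomic_dec c; last exact: derKTp_contrL_compound smaller Nc.
  by move=> S D T H; apply: derKTp_contrL_atomic Ac H (Permutation_refl _).
have [Oc | Nc] := omegaK_dec c; last exact: derKTp_contrR_compound smaller Nc.
by move=> S G T H; apply: derKTp_contrR_omegaK Oc H (Permutation_refl _).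
Qed.

Lemma derKTp_DT_boxes l S G D :
  derKTp (boxes l ++ S) (map snd l ++ G) D -> derKTp S (boxes l ++ G) D.
Proof.
elim: l S G => [|[h a] l IH] S G //= H.
apply: derp_DT; apply: (derKTp_permG (G := boxes l ++ a :: G)); first by perm_solve.
by apply: IH; perm_exact H.
Qed.

Lemma derKT_derKTp G D : derKT G D -> derKTp [::] G D.
Proof.
elim=> {G D}.
- move=> G D G' D' _ IH PG PD.
  exact: derp_perm IH (Permutation_refl _) PG PD.
- by move=> p G D; apply: derp_id.
- by move=> G D; apply: derp_bot.
- by move=> G D a1 a2 _ IH1 _ IH2; exact: derp_Rand IH1 IH2.
- by move=> G D a1 a2 _ IH; exact: derp_Land IH.
- by move=> G D a1 a2 _ IH; exact: derp_Ror IH.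
- by move=> G D a1 a2 _ IH1 _ IH2; exact: derp_Lor IH1 IH2.
- by move=> G D a1 a2 _ IH; exact: derp_Rimp IH.
- by move=> G D a1 a2 _ IH1 _ IH2; exact: derp_Limp IH1 IH2.
- by move=> G D a _ IH; exact: derp_Rneg IH.
- by move=> G D a _ IH; exact: derp_Lneg IH.
- move=> l g b S O _ IH lg _ _.
  apply: (derKTp_permG (G := boxes l ++ S)); first by perm_solve.
  apply: derKTp_DT_boxes; rewrite cats0.
  by apply: (derKTp_DK_adm (S := [::])) => // Z; exact: derKTp_weakL.
- move=> G D h a _ IH; apply: derp_DT.
  exact: (proj1 (derKTp_contr a)) _ _ _ (derKTp_invL (lprem_box h a) IH (Permutation_refl _)).
Qed.

End KTD.

Theorem lemma6p14 (A : finType) (hA : 0 < #|A|) (G D : list (form A)) :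
  derKT G D <-> derKTp [::] G D.
Proof.
split; first exact: derKT_derKTp.
by move/derKTp_derKT; rewrite cats0.
Qed.
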